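(* Let $\mathbf{E}\subseteq\mathbf{A}$ be finite symmetric integral relation algebras. Then the map $a\mapsto J(a,0)$ is an isomorphism from $\mathbf{A}$ onto a subalgebra $\mathbf{A}'$ of $\mathbf{C}_{\mathbf{E}}(\mathbf{A})$.
   Context: Relation algebras are in the sense of Tarski; $1'$ identity, $0'$ its complement, $;$ relative product; integral: $1'$ is an atom; symmetric: $x^{\smile}=x$; a diversity atom is an atom below $0'$. The algebra $\mathbf{C}_{\mathbf{E}}(\mathbf{A})$: for each atom $x$ of $\mathbf{A}$ let $c(x)$ be the atom of $\mathbf{E}$ with $x\le c(x)$. Let $T(i,j,k)$, for $i,j,k\in\omega$, hold iff $(i\le j=k)$ or $(j\le k=i)$ or $(k\le i=j)$. Let $At=\{1'\}\cup\{x^{(i)}:x$ a diversity atom of $\mathbf{A}$, $i\in\omega\}$ (distinct formal symbols). Let $C\subseteq At^3$ consist of all permutations of $(1',1',1')$, $(1',x^{(i)},x^{(i)})$, and $(x^{(i)},y^{(j)},z^{(k)})$ where $x,y,z$ are diversity atoms of $\mathbf{A}$ with $x;y\ge z$ in $\mathbf{A}$ and, if $c(x)=c(y)=c(z)$, then $T(i,j,k)$. $\mathbf{C}_{\mathbf{E}}(\mathbf{A})$ is the algebra of all subsets of $At$ with set-theoretic Boolean operations, identity $\{1'\}$, converse the identity map, and $X;Y=\{w:\exists u\in X,\exists v\in Y,(u,v,w)\in C\}$ (a complete atomic non-associative relation algebra with atoms the elements of $At$). For $a\in\mathbf{A}$ and $n\in\omega$, $J(a,n)$ is the join of all $x^{(i)}$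 with $x$ a diversity atom of $\mathbf{A}$, $x\le a$, $n\le i\in\omega$, together with $1'$ if $1'\le a$. *)

From mathcomp Require Import all_boot.
Set Implicit Arguments.
Unset Strict Implicit.
Unset Printing Implicit Defensive.

(* Relation algebras in the sense of Tarski: the ten axioms R1-R10,
   with Boolean join (+) and complement (-) as primitives. *)
Record RA := {
  ra_car :> finType;
  ra_join : ra_car -> ra_car -> ra_car;
  ra_compl : ra_car -> ra_car;
  ra_comp : ra_car -> ra_car -> ra_car;
  ra_conv : ra_car -> ra_car;
  ra_id : ra_car;
  ax_R1 : forall x y, ra_join x y = ra_join y x;
  ax_R2 : forall x y z, ra_join x (ra_join y z) = ra_join (ra_join x y) z;
  ax_R3 : forall x y,
    ra_join (ra_compl (ra_join (ra_compl x) y))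
            (ra_compl (ra_join (ra_compl x) (ra_compl y))) = x;
  ax_R4 : forall x y z, ra_comp x (ra_comp y z) = ra_comp (ra_comp x y) z;
  ax_R5 : forall x y z, ra_comp (ra_join x y) z = ra_join (ra_comp x z) (ra_comp y z);
  ax_R6 : forall x, ra_comp x ra_id = x;
  ax_R7 : forall x, ra_conv (ra_conv x) = x;
  ax_R8 : forall x y, ra_conv (ra_join x y) = ra_join (ra_conv x) (ra_conv y);
  ax_R9 : forall x y, ra_conv (ra_comp x y) = ra_comp (ra_conv y) (ra_conv x);
  ax_R10 : forall x y,
    ra_join (ra_comp (ra_conv x) (ra_compl (ra_comp x y))) (ra_compl y) = ra_compl y
}.

Section RADefs.
Variable A : RA.

Definition ra_zero : A := ra_compl (ra_join (ra_id A) (ra_compl (ra_id A))).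
Definition ra_le (x y : A) : Prop := ra_join x y = y.
Definition ra_diversity : A := ra_compl (ra_id A).

Definition is_atom (x : A) : Prop :=
  x <> ra_zero /\ forall y, ra_le y x -> y = ra_zero \/ y = x.
Definition is_div_atom (x : A) : Prop := is_atom x /\ ra_le x ra_diversity.

Definition ra_integral : Prop := is_atom (ra_id A).
Definition ra_symmetric : Prop := forall x : A, ra_conv x = x.

Definition ra_subalgebra (E : A -> Prop) : Prop :=
  E (ra_id A) /\
  (forall x y, E x -> E y -> E (ra_join x y)) /\
  (forall x, E x -> E (ra_compl x)) /\
  (forall x y, E x -> E y -> E (ra_comp x y)) /\
  (forall x, E x -> E (ra_conv x)).

Definition is_atom_in (E : A -> Prop) (e : A) : Prop :=
  E e /\ e <> ra_zero /\ forall y, E y -> ra_le y e -> y = ra_zero \/ y = e.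

End RADefs.

Section CEA.
Variables (A : RA) (E : A -> Prop).

Definition divatom := { x : A | is_div_atom x }.

(* At = {1'} ∪ { x^(i) : x diversity atom, i ∈ ω } *)
Inductive atC : Type :=
| CId : atC
| CDv : divatom -> nat -> atC.

Definition Tnat (i j k : nat) : Prop :=
  (i <= j /\ j = k)%coq_nat \/ (j <= k /\ k = i)%coq_nat \/ (k <= i /\ i = j)%coq_nat.

(* c(x) = c(y) = c(z): the E-atoms above x, y, z coincide
   (there is a single E-atom above all three) *)
Definition same_c (x y z : A) : Prop :=
  exists e, is_atom_in E e /\ ra_le x e /\ ra_le y e /\ ra_le z e.

(* generating triples (before closing under permutations) *)
Definition base_cyc (u v w : atC) : Prop :=
  match u, v, w with
  | CId, _, _ => v = w                       (* (1',1',1') and (1',x^i,x^i) *)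
  | CDv x i, CDv y j, CDv z k =>
      ra_le (proj1_sig z) (ra_comp (proj1_sig x) (proj1_sig y)) /\
      (same_c (proj1_sig x) (proj1_sig y) (proj1_sig z) -> Tnat i j k)
  | _, _, _ => False
  end.

Definition Ccyc (u v w : atC) : Prop :=
  base_cyc u v w \/ base_cyc u w v \/ base_cyc v u w \/
  base_cyc v w u \/ base_cyc w u v \/ base_cyc w v u.

Definition CE := atC -> Prop.

Definition C_join (X Y : CE) : CE := fun w => X w \/ Y w.
Definition C_compl (X : CE) : CE := fun w => ~ X w.
Definition C_id : CE := fun w => w = CId.
Definition C_conv (X : CE) : CE := X.
Definition C_comp (X Y : CE) : CE :=
  fun w => exists u v, X u /\ Y v /\ Ccyc u v w.

Definition J (a : A) (n : nat) : CE :=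
  fun w => match w with
           | CId => ra_le (ra_id A) a
           | CDv x i => ra_le (proj1_sig x) a /\ (n <= i)%coq_nat
           end.

Definition C_subalgebra (S : CE -> Prop) : Prop :=
  S C_id /\
  (forall X Y, S X -> S Y -> S (C_join X Y)) /\
  (forall X, S X -> S (C_compl X)) /\
  (forall X Y, S X -> S Y -> S (C_comp X Y)) /\
  (forall X, S X -> S (C_conv X)).

End CEA.

From mathcomp Require Import all_boot.
From Stdlib Require Import FunctionalExtensionality PropExtensionality.

(* A finite Boolean algebra is atomic, so an element is determined by the atoms
   below it, and J(a,0) is the set of atoms of C_E(A) lying over atoms below a.
   Hence a ↦ J(a,0) is injective and preserves the Boolean operations; converse
   is trivial by symmetry.  For the relative product, an atom w lies below a ; b
   iff there are atoms x ≤ a, y ≤ b with w ≤ x ; y (the cycle law of a symmetric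
   algebra lets us shrink a and b to atoms one at a time).  Every triple of C
   projects to such a triple of A, and conversely such a triple lifts to C by
   giving all its diversity atoms the same index. *)

Set Implicit Arguments.
Unset Strict Implicit.
Unset Printing Implicit Defensive.

Definition ra_meet (A : RA) (x y : A) : A := ra_compl (ra_join (ra_compl x) (ra_compl y)).
Definition ra_top (A : RA) : A := ra_join (ra_id A) (ra_compl (ra_id A)).

Local Notation "x ⊔ y" := (ra_join x y) (at level 50, left associativity).
Local Notation "x ⊓ y" := (ra_meet x y) (at level 40, left associativity).
Local Notation "- x" := (ra_compl x).
Local Notation "x ⨾ y" := (ra_comp x y) (at level 40, left associativity).
Local Notation "x ≤ y" := (ra_le x y) (at level 70, no associativity).

Section BooleanReduct.
Variable A : RA.
Implicit Types x y z a b : A.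

(* Huntington's derivation of the Boolean laws from R1-R3: each proof closes
   the listed instances of the axioms under congruence. *)
Lemma join_compl_indep x y : x ⊔ - x = y ⊔ - y.
Proof.
pose proof (ax_R3 x y); pose proof (ax_R3 x (- y)); pose proof (ax_R3 (- x) (- y)).
pose proof (ax_R3 y (- x)); pose proof (ax_R3 (- y) (- x)); pose proof (ax_R3 y x).
pose proof (ax_R2 x (- (- - x ⊔ - y)) (- (- - x ⊔ - - y))).
pose proof (ax_R2 y (- (- - y ⊔ - x)) (- (- - y ⊔ - - x))).
pose proof (ax_R2 (- (y ⊔ - x)) (- (- y ⊔ - x)) (- (- y ⊔ - - x))).
pose proof (ax_R2 (- (- - y ⊔ - x)) (- (- y ⊔ - x)) (- (- y ⊔ x))).
pose proof (ax_R2 (- (y ⊔ - x)) (- (- x ⊔ - y)) (- (- y ⊔ x))).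
pose proof (ax_R1 (- (- x ⊔ - y)) (- (- x ⊔ - - y))).
pose proof (ax_R1 (- (- y ⊔ x)) (- (- y ⊔ - x))).
pose proof (ax_R1 y (- (- - y ⊔ - x))).
pose proof (ax_R1 (- x) y); pose proof (ax_R1 (- x) (- y)).
pose proof (ax_R1 (- x) (- - y)); pose proof (ax_R1 (- - x) (- y)).
pose proof (ax_R1 (- - x) (- - y)).
congruence.
Qed.

Lemma join_compl x : x ⊔ - x = ra_top A.
Proof. exact: join_compl_indep. Qed.

Lemma joinxx x : x ⊔ x = x.
Proof.
set T := ra_top A.
pose proof (join_compl (- T)); pose proof (join_compl (- - x)); pose proof (join_compl (- - T)).
pose proof (ax_R3 x (- - x)); pose proof (ax_R3 x (- T)); pose proof (ax_R3 (x ⊔ x) (- x)).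
pose proof (ax_R3 T (- - T)); pose proof (ax_R3 (- x) (- - x)); pose proof (ax_R3 (- T) (- - T)).
pose proof (ax_R3 (T ⊔ - - T) T); pose proof (ax_R3 (- - x) (- x)).
pose proof (ax_R3 (- - T) (- T)); pose proof (ax_R3 T x).
pose proof (ax_R2 (- (- - T ⊔ T)) (- (- - T ⊔ - T)) (- - T)).
pose proof (ax_R2 (- (- - x ⊔ x)) (- (T ⊔ - - T)) (- - x ⊔ - T)).
pose proof (ax_R2 (- (- - x ⊔ x)) (- T) (- - - x)).
pose proof (ax_R2 (- (- - x ⊔ - - x)) (- T) (- - - T)).
pose proof (ax_R2 (- - - T) (- (- T ⊔ - x)) (- (- x ⊔ T))).
pose proof (ax_R2 (- - - T) (- T) (- (- x ⊔ - - - x))).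
pose proof (ax_R2 (- - - T) (- (- x ⊔ - x)) (- T)).
pose proof (ax_R1 (- x) (- - - x)); pose proof (ax_R1 (- x) (- - - T)).
pose proof (ax_R1 (- T) (- - - T)); pose proof (ax_R1 (- - - x) (- - x)).
pose proof (ax_R1 (- - - T) (- - T)).
pose proof (ax_R1 (- (- - - x ⊔ - x)) (- (- - - x ⊔ - - x))).
pose proof (ax_R1 (- (- - - T ⊔ - T)) (- (- - - T ⊔ - - T))).
subst T; congruence.
Qed.

Lemma complK x : - - x = x.
Proof.
pose proof (ax_R3 x (- - x)); pose proof (ax_R3 (- - x) (- x)).
pose proof (join_compl (- x)); pose proof (join_compl (- - x)).
pose proof (ax_R1 (- (- x ⊔ - - x)) (- (- x ⊔ - - - x))).
pose proof (ax_R1 (- x) (- - - x)); pose proof (ax_R1 (- - x) (- - - x)).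
congruence.
Qed.


Lemma joinx0 x : x ⊔ ra_zero A = x.
Proof.
have := ax_R3 x (- x).
by rewrite complK joinxx (ax_R1 (- x) x) join_compl complK.
Qed.

Lemma join_meet_compl x y : x ⊓ y ⊔ x ⊓ - y = x.
Proof. exact: ax_R3. Qed.

Lemma meetC x y : x ⊓ y = y ⊓ x.
Proof. by rewrite /ra_meet ax_R1. Qed.

Lemma le_refl x : x ≤ x.
Proof. exact: joinxx. Qed.

Lemma le_trans y x z : x ≤ y -> y ≤ z -> x ≤ z.
Proof. by rewrite /ra_le => xy <-; rewrite ax_R2 xy. Qed.

Lemma le_anti x y : x ≤ y -> y ≤ x -> x = y.
Proof. by rewrite /ra_le => xy yx; rewrite -xy ax_R1 yx. Qed.

Lemma le_joinl x y : x ≤ x ⊔ y.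
Proof. by rewrite /ra_le ax_R2 joinxx. Qed.

Lemma le_joinr x y : y ≤ x ⊔ y.
Proof. by rewrite ax_R1; apply: le_joinl. Qed.

Lemma join_lub x y z : x ≤ z -> y ≤ z -> x ⊔ y ≤ z.
Proof. by rewrite /ra_le => xz yz; rewrite -ax_R2 yz. Qed.

Lemma le_meetl x y : x ⊓ y ≤ x.
Proof. by rewrite -{2}(join_meet_compl x y); apply: le_joinl. Qed.

Lemma le_meetr x y : x ⊓ y ≤ y.
Proof. by rewrite meetC; apply: le_meetl. Qed.

Lemma le_compl x y : x ≤ y -> - y ≤ - x.
Proof.
rewrite /ra_le => xy.
have := join_meet_compl (- x) y.
have -> : - x ⊓ - y = - y by rewrite /ra_meet !complK xy.
by move=> <-; rewrite ax_R2 (ax_R1 (- y)) -ax_R2 joinxx.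
Qed.

Lemma le_complE x y : (- y ≤ - x) <-> (x ≤ y).
Proof. by split=> [/le_compl|/le_compl //]; rewrite !complK. Qed.

Lemma meet_glb x y z : z ≤ x -> z ≤ y -> z ≤ x ⊓ y.
Proof.
move=> zx zy; apply/le_complE; rewrite /ra_meet complK.
by apply: join_lub; apply: le_compl.
Qed.

Lemma meet_mono x x' y y' : x ≤ x' -> y ≤ y' -> x ⊓ y ≤ x' ⊓ y'.
Proof.
move=> xx' yy'; apply: meet_glb.
- exact: le_trans (le_meetl x y) xx'.
- exact: le_trans (le_meetr x y) yy'.
Qed.

Lemma le0x x : ra_zero A ≤ x.
Proof. by rewrite /ra_le ax_R1 joinx0. Qed.

Lemma le0 x : x ≤ ra_zero A -> x = ra_zero A.
Proof. by move=> x0; apply: le_anti x0 (le0x x). Qed.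

Lemma meet_compl x : x ⊓ - x = ra_zero A.
Proof. by rewrite /ra_meet complK ax_R1 join_compl. Qed.

Lemma meet_compl0_le x y : x ⊓ - y = ra_zero A -> x ≤ y.
Proof.
move=> xy0; rewrite -(join_meet_compl x y) xy0 joinx0; exact: le_meetr.
Qed.

End BooleanReduct.

Section Atoms.
Variable A : RA.
Implicit Types x y a b c t : A.

Lemma atom_le_or_compl a x : is_atom x -> x ≤ a \/ x ≤ - a.
Proof.
case=> _ min_x; case: (min_x (x ⊓ a) (le_meetl x a)) => [xa0|<-].
- by right; apply: meet_compl0_le; rewrite complK.
- by left; apply: le_meetr.
Qed.

Lemma atom_not_le_compl a x : is_atom x -> x ≤ a -> x ≤ - a -> False.
Proof.
case=> x0 _ xa xa'; apply: x0; apply: le0.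
by rewrite -(meet_compl a); apply: meet_glb.
Qed.

Lemma atom_le_complE a x : is_atom x -> (x ≤ - a <-> ~ x ≤ a).
Proof.
move=> x_at; split=> [xa' xa|xa]; first exact: atom_not_le_compl x_at xa xa'.
by case: (atom_le_or_compl a x_at).
Qed.

Lemma atom_le_join a b x : is_atom x -> (x ≤ a ⊔ b <-> x ≤ a \/ x ≤ b).
Proof.
move=> x_at; split=> [xab|[xa|xb]].
- case: (atom_le_or_compl a x_at) => [|xa']; first by left.
  case: (atom_le_or_compl b x_at) => [|xb']; first by right.
  have := meet_glb xa' xb'; rewrite /ra_meet !complK => xab'.
  by case: (atom_not_le_compl x_at xab xab').
- exact: le_trans xa (le_joinl a b).
- exact: le_trans xb (le_joinr a b).
Qed.

Lemma atom_le_meet0 c x : is_atom x -> (x ≤ c <-> c ⊓ x <> ra_zero A).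
Proof.
case=> x0 min_x; split=> [xc cx0|cx0].
- by apply: x0; apply: le0; rewrite -cx0; apply: meet_glb (le_refl x).
- case: (min_x (c ⊓ x) (le_meetr c x)) => [//|<-]; exact: le_meetl.
Qed.

Lemma atom_eq x y : is_atom x -> is_atom y -> x ⊓ y <> ra_zero A -> x = y.
Proof.
move=> x_at y_at /(atom_le_meet0 _ y_at) yx.
by case: x_at => _ /(_ y yx) [y0|]; first by case: y_at.
Qed.

Lemma exists_atom_le x : x <> ra_zero A -> exists2 t, is_atom t & t ≤ x.
Proof.
move=> x0.
pose below y := [pred z : A | z ⊔ y == y].
pose nz_below_x := [pred y : A | (y != ra_zero A) && (y ⊔ x == x)].
have x_nz_below_x : nz_below_x x by apply/andP; split; [apply/eqP | apply/eqP/le_refl].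
case: (arg_minnP (fun y => #|below y|) x_nz_below_x) => t /andP [/eqP t0 /eqP tx] t_min.
exists t => //; split=> // z zt.
case: (eqVneq z (ra_zero A)) => [->|z0]; first by left.
case: (eqVneq z t) => [->|z_neq_t]; first by right.
have /t_min : nz_below_x z by apply/andP; split=> //; apply/eqP/(le_trans zt tx).
rewrite leqNgt => /negP [].
apply: proper_card; apply/properP; split.
- by apply/subsetP => w /eqP wz; apply/eqP/(le_trans wz zt).
- exists t; first exact/eqP/le_refl.
  by apply/negP => /eqP tz; rewrite (le_anti zt tz) eqxx in z_neq_t.
Qed.

Lemma le_by_atoms a b : (forall t, is_atom t -> t ≤ a -> t ≤ b) -> a ≤ b.
Proof.
move=> ab; apply: meet_compl0_le.
case: (eqVneq (a ⊓ - b) (ra_zero A)) => // /eqP /exists_atom_le [t t_at t_le].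
have t_a := le_trans t_le (le_meetl a (- b)).
have t_b' := le_trans t_le (le_meetr a (- b)).
by case: (atom_not_le_compl t_at (ab t t_at t_a) t_b').
Qed.

Lemma eq_by_atoms a b : (forall t, is_atom t -> (t ≤ a <-> t ≤ b)) -> a = b.
Proof.
by move=> ab; apply: le_anti; apply: le_by_atoms => t /ab [].
Qed.

Lemma atom_id_or_div x : ra_integral A -> is_atom x -> x = ra_id A \/ is_div_atom x.
Proof.
move=> [_ min_id] x_at; case: (atom_le_or_compl (ra_id A) x_at) => [x_id|x_div].
- by left; case: (min_id x x_id) => // x0; case: x_at.
- by right.
Qed.

End Atoms.

Section Symmetric.
Variable A : RA.
Hypothesis symA : ra_symmetric A.
Implicit Types x y z a b : A.

Lemma compC x y : x ⨾ y = y ⨾ x.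
Proof. by have := ax_R9 x y; rewrite !symA. Qed.

Lemma comp1x x : ra_id A ⨾ x = x.
Proof. by rewrite compC ax_R6. Qed.

Lemma comp_monol x y z : x ≤ y -> x ⨾ z ≤ y ⨾ z.
Proof. by rewrite /ra_le => xy; rewrite -ax_R5 xy. Qed.

Lemma comp_monor x y z : x ≤ y -> z ⨾ x ≤ z ⨾ y.
Proof. by rewrite !(compC z); apply: comp_monol. Qed.

Definition consistent x y z : Prop := x ⨾ y ⊓ z <> ra_zero A.

(* The cycle law; in a symmetric algebra R10 reads [x ⨾ -(x ⨾ z) ≤ -z]. *)
Lemma consistent23 x y z : consistent x y z -> consistent x z y.
Proof.
move=> xyz xzy0; apply: xyz; apply: le0.
have R10 : x ⨾ - (x ⨾ z) ≤ - z by have := ax_R10 x z; rewrite symA.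
have y_le : y ≤ - (x ⨾ z) by apply: meet_compl0_le; rewrite complK meetC.
rewrite -(meet_compl z) meetC.
exact: meet_mono (le_refl z) (le_trans (comp_monor x y_le) R10).
Qed.

Lemma consistent12 x y z : consistent x y z -> consistent y x z.
Proof. by rewrite /consistent compC. Qed.

Lemma consistent_mono x x' y y' z :
  x ≤ x' -> y ≤ y' -> consistent x y z -> consistent x' y' z.
Proof.
move=> xx' yy' xyz xyz'0; apply: xyz; apply: le0; rewrite -xyz'0.
apply: meet_mono (le_refl z).
exact: le_trans (comp_monol y xx') (comp_monor x' yy').
Qed.

Lemma consistent_atoms_below a b z : consistent a b z ->
  exists x y, [/\ is_atom x, x ≤ a, is_atom y, y ≤ b & consistent x y z].
Proof.
move=> /consistent23 /exists_atom_le [y y_at y_le].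
have yzb : consistent a z y.
  by apply/(atom_le_meet0 _ y_at); apply: le_trans y_le (le_meetl _ _).
have /exists_atom_le [x x_at x_le] : consistent y z a.
  by apply/consistent12/consistent23/consistent12.
have yzx : consistent y z x.
  by apply/(atom_le_meet0 _ x_at); apply: le_trans x_le (le_meetl _ _).
exists x, y; split=> //.
- exact: le_trans x_le (le_meetr _ _).
- exact: le_trans y_le (le_meetr _ _).
- exact/consistent12/consistent23.
Qed.

End Symmetric.

Section CE_embedding.
Variables (A : RA) (E : A -> Prop).
Hypotheses (intA : ra_integral A) (symA : ra_symmetric A).
Implicit Types (a b x y : A) (u v w : atC A).

Definition base_atom (u : atC A) : A :=
  if u is CDv x _ then proj1_sig x else ra_id A.

Lemma base_atomP u : is_atom (base_atom u).
Proof. by case: u => [|x i]; [apply: intA | case: (proj2_sig x)]. Qed.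

Lemma J0E a u : J a 0 u <-> base_atom u ≤ a.
Proof. by case: u => [|x i] //=; split=> [[]//|]; split=> //; apply: le_0_n. Qed.

Lemma base_cyc_consistent u v w :
  base_cyc E u v w -> consistent (base_atom u) (base_atom v) (base_atom w).
Proof.
case: u => [/= <-|x i].
- rewrite /consistent comp1x // /ra_meet joinxx complK; exact: (proj1 (base_atomP v)).
- case: v => [|y j] //; case: w => [|z k] //= [zxy _].
  exact/(atom_le_meet0 _ (proj1 (proj2_sig z))).
Qed.

Lemma Ccyc_consistent u v w :
  Ccyc E u v w -> consistent (base_atom u) (base_atom v) (base_atom w).
Proof.
have c12 := @consistent12 A symA; have c23 := @consistent23 A symA.
by case=> [|[|[|[|[|]]]]] /base_cyc_consistent; auto.
Qed.

(* Giving the three diversity atoms the same index satisfies [T] whatever [c] is. *)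
Lemma Ccyc_of_consistent x y w : is_atom x -> is_atom y ->
  consistent x y (base_atom w) ->
  exists u v, [/\ base_atom u = x, base_atom v = y & Ccyc E u v w].
Proof.
move=> x_at y_at xyw.
have w_at := base_atomP w.
case: (atom_id_or_div intA x_at) => [x1|x_div].
  rewrite x1 /consistent comp1x // in xyw.
  by exists (CId A), w; split; [rewrite x1 | apply/esym/atom_eq | left].
case: (atom_id_or_div intA y_at) => [y1|y_div].
  rewrite y1 /consistent ax_R6 in xyw.
  by exists w, (CId A); split; [apply/esym/atom_eq | rewrite y1 | right; right; left].
case: w w_at xyw => [|z k] w_at xyw.
- have /atom_eq xy : x ⊓ y <> ra_zero A.
    by have := consistent23 symA xyw; rewrite /consistent ax_R6.
  exists (CDv (exist _ x x_div) 0), (CDv (exist _ x x_div) 0).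
  by split; [| apply: xy | do 4!right; left].
- exists (CDv (exist _ x x_div) k), (CDv (exist _ y y_div) k); split=> //; left.
  by split; [apply/(atom_le_meet0 _ w_at) | left].
Qed.

Lemma CE_ext (X Y : CE A) : (forall w, X w <-> Y w) -> X = Y.
Proof.
by move=> XY; apply: functional_extensionality => w; apply: propositional_extensionality.
Qed.

Lemma J0_inj a b : J a 0 = J b 0 -> a = b.
Proof.
move=> Jab; apply: eq_by_atoms => t t_at.
have same_below u : base_atom u = t -> (t ≤ a <-> t ≤ b).
  by move=> <-; split=> /J0E; [rewrite Jab | rewrite -Jab] => /J0E.
case: (atom_id_or_div intA t_at) => [t1|t_div].
- exact: (same_below (CId A)).
- exact: (same_below (CDv (exist _ t t_div) 0)).
Qed.

Lemma J0_id : J (ra_id A) 0 = @C_id A.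
Proof.
apply: CE_ext => w; rewrite J0E /C_id; case: w => [|[x [x_at x_div]] i] /=.
- by split=> // _; apply: le_refl.
- by split=> // x1; case: (atom_not_le_compl x_at x1 x_div).
Qed.

Lemma J0_join a b : J (a ⊔ b) 0 = C_join (J a 0) (J b 0).
Proof. by apply: CE_ext => w; rewrite /C_join !J0E; apply: atom_le_join (base_atomP w). Qed.

Lemma J0_compl a : J (- a) 0 = C_compl (J a 0).
Proof. by apply: CE_ext => w; rewrite /C_compl !J0E; apply: atom_le_complE (base_atomP w). Qed.

Lemma J0_comp a b : J (a ⨾ b) 0 = C_comp E (J a 0) (J b 0).
Proof.
apply: CE_ext => w; rewrite J0E /C_comp; have w_at := base_atomP w.
split=> [/(atom_le_meet0 _ w_at) abw | [u [v [/J0E ua [/J0E vb uvw]]]]].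
- have [x [y [x_at xa y_at yb xyw]]] := consistent_atoms_below symA abw.
  have [u [v [ux vy uvw]]] := Ccyc_of_consistent x_at y_at xyw.
  by exists u, v; rewrite !J0E ux vy.
- apply/(atom_le_meet0 _ w_at).
  exact: consistent_mono ua vb (Ccyc_consistent uvw).
Qed.

Lemma J0_conv a : J (ra_conv a) 0 = C_conv (J a 0).
Proof. by rewrite symA. Qed.

End CE_embedding.

Theorem lemma2 (A : RA) (E : A -> Prop) :
  ra_integral A -> ra_symmetric A ->
  ra_subalgebra E ->
  let A' : CE A -> Prop := fun X => exists a : A, X = J a 0 in
  C_subalgebra E A' /\
  (forall a b : A, J a 0 = J b 0 -> a = b) /\
  J (ra_id A) 0 = @C_id A /\
  (forall a b : A, J (ra_join a b) 0 = C_join (J a 0) (J b 0)) /\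
  (forall a : A, J (ra_compl a) 0 = C_compl (J a 0)) /\
  (forall a b : A, J (ra_comp a b) 0 = C_comp E (J a 0) (J b 0)) /\
  (forall a : A, J (ra_conv a) 0 = C_conv (J a 0)).
Proof.
move=> intA symA _ A'.
have J0_compE := J0_comp E intA symA.
split; last first.
  do !split.
  - exact: J0_inj intA.
  - exact: J0_id.
  - exact: J0_join intA.
  - exact: J0_compl intA.
  - exact: J0_compE.
  - exact: J0_conv symA.
do !split.
- by exists (ra_id A); rewrite J0_id.
- by move=> _ _ [a ->] [b ->]; exists (a ⊔ b); rewrite J0_join.
- by move=> _ [a ->]; exists (- a); rewrite J0_compl.
- by move=> _ _ [a ->] [b ->]; exists (a ⨾ b); rewrite J0_compE.
- by move=> _ [a ->]; exists a.
Qed.
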